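(* Let $n\ge 2$, let $\mathcal{S}\subseteq(\mathbb{C}^d)^{\otimes n}$ be the permutation-symmetric subspace, and let $B=P\,J\,P^{-1}$ be a $d\times d$ complex matrix with Jordan normal form $J$, whose distinct eigenvalues are $\lambda_1,\ldots,\lambda_p$. Let $\tilde\lambda_1,\ldots,\tilde\lambda_p$ be pairwise distinct complex numbers, and let $\tilde J$ be obtained from $J$ by replacing, in every Jordan block, the eigenvalue $\lambda_i$ by $\tilde\lambda_i$ (keeping the block sizes and the superdiagonal ones), and set $\tilde B=P\tilde J P^{-1}$. Then for every $|\psi\rangle\in\mathcal{S}$: $B_{(1)}|\psi\rangle\in\mathcal{S}$ if and only if $\tilde B_{(1)}|\psi\rangle\in\mathcal{S}$.
   Context: $\mathcal{S}$ is the set of vectors in $(\mathbb{C}^d)^{\otimes n}$ invariant under all permutations of the $n$ tensor factors. For a $d\times d$ matrix $Y$, $Y_{(1)}$ denotes $Y\otimes\mathbb{I}\otimes\cdots\otimes\mathbb{I}$ on $(\mathbb{C}^d)^{\otimes n}$. One says $B$ stabilizes $|\psi\rangle\in\mathcal{S}$ if $B_{(1)}|\psi\rangle\in\mathcal{S}$; the theorem says the set of states stabilized by $B$ depends only on the Jordan block structure (which blocks share an eigenvalue), not on the eigenvalue values. *)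

From HB Require Import structures.
From mathcomp Require Import all_boot all_order all_algebra all_fingroup.
Set Implicit Arguments. Unset Strict Implicit. Unset Printing Implicit Defensive.
Import Order.TTheory GRing.Theory Num.Theory.
Local Open Scope ring_scope.

(* Vectors of (C^d)^{(x) n}: coefficient functions on basis multi-indices
   x : 'I_n -> 'I_d  (|x_1 ... x_n>). *)
Definition tensor (C : Type) (n d : nat) := {ffun 'I_n -> 'I_d} -> C.

Definition sym_vec (C : Type) (n d : nat) (psi : tensor C n d) : Prop :=
  forall (s : 'S_n) (x : {ffun 'I_n -> 'I_d}),
    psi [ffun i => x (s i)] = psi x.

(* Y_(1) = Y (x) I (x) ... (x) I acting on the first tensor factor (index 0):
   (Y_(1) psi)(x) = sum_k Y_{x_0, k} psi(x[0 := k]). *)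
Definition op1 (C : nzRingType) (n d : nat) (Y : 'M[C]_d) (psi : tensor C n d)
  : tensor C n d :=
  fun x => \sum_(i0 : 'I_n | nat_of_ord i0 == 0%N) \sum_(k < d)
             Y (x i0) k * psi [ffun i => if i == i0 then k else x i].

(* Jordan matrix with diagonal a and superdiagonal entries c i in {0,1}
   (c i = true iff i and i+1 lie in the same Jordan block). *)
Definition jordan_mx (C : nzRingType) (d : nat) (a : 'I_d -> C) (c : 'I_d -> bool)
  : 'M[C]_d :=
  \matrix_(i, j) ((i == j)%:R * a i + ((nat_of_ord j == (nat_of_ord i).+1) && c i)%:R).

Definition jordan_consistent (d p : nat) (e : 'I_d -> 'I_p) (c : 'I_d -> bool) : Prop :=
  forall i j : 'I_d, nat_of_ord j = (nat_of_ord i).+1 -> c i -> e i = e j.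

From HB Require Import structures.
From mathcomp Require Import all_boot all_order all_algebra all_fingroup.
Import Order.TTheory GRing.Theory Num.Theory.
Local Open Scope ring_scope.
Set Implicit Arguments. Unset Strict Implicit.

(* Since psi is symmetric, B_(1) psi is symmetric iff B acting on any tensor
   factor j gives the same vector as B acting on the first one.  The set of
   matrices B with this property contains the scalars and is closed under sums
   and under products of commuting matrices, hence under polynomials.  On the
   other hand, relabelling the eigenvalues of a Jordan matrix J yields a
   polynomial in J: the diagonal projector E_k onto the indices labelled k is
   a polynomial in J (Bezout, since the (X - lam_k)^(d+1) are pairwise
   coprime and (J - lam_k)^(d+1) E_k = 0), and the relabelled matrix is
   J + sum_k (lam'_k - lam_k) E_k.  Conjugation by P preserves all this. *)

Section FactorAction.
Variables (R : comNzRingType) (n d : nat).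
Implicit Types (x : {ffun 'I_n -> 'I_d}) (phi : tensor R n d) (A B : 'M[R]_d).

Definition upd x (j : 'I_n) (k : 'I_d) : {ffun 'I_n -> 'I_d} :=
  [ffun i => if i == j then k else x i].

Lemma upd_same x j k : upd x j k j = k.
Proof. by rewrite ffunE eqxx. Qed.

Lemma upd_other x j k l : l != j -> upd x j k l = x l.
Proof. by rewrite ffunE => /negPf ->. Qed.

Lemma upd_upd x j k k' : upd (upd x j k) j k' = upd x j k'.
Proof. by apply/ffunP => i; rewrite !ffunE; case: (i == j). Qed.

Lemma upd_comm x j l k m : j != l ->
  upd (upd x j k) l m = upd (upd x l m) j k.
Proof.
move=> njl; apply/ffunP => i; rewrite !ffunE.
by case: (eqVneq i l) => [->|//]; rewrite eq_sym (negPf njl).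
Qed.

Lemma upd_id x j : upd x j (x j) = x.
Proof. by apply/ffunP => i; rewrite ffunE; case: eqP => // ->. Qed.

Definition op_at (j : 'I_n) A phi : tensor R n d :=
  fun x => \sum_(k < d) A (x j) k * phi (upd x j k).

Lemma eq_op_at j A phi phi' : phi =1 phi' -> op_at j A phi =1 op_at j A phi'.
Proof. by move=> eq_phi x; apply: eq_bigr => k _; rewrite eq_phi. Qed.

Lemma op_atM j A B phi : op_at j (A *m B) phi =1 op_at j A (op_at j B phi).
Proof.
move=> x; rewrite /op_at; under eq_bigr do rewrite mxE big_distrl.
rewrite exchange_big; apply: eq_bigr => l _ /=.
rewrite upd_same big_distrr; apply: eq_bigr => k _.
by rewrite upd_upd -mulrA.
Qed.

Lemma op_atD j A B phi x :
  op_at j (A + B) phi x = op_at j A phi x + op_at j B phi x.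
Proof. by rewrite /op_at -big_split; apply: eq_bigr => k _; rewrite mxE mulrDl. Qed.

Lemma op_at_scalar j a phi x : op_at j a%:M phi x = a * phi x.
Proof.
rewrite /op_at (bigD1 (x j)) //= big1 ?addr0.
  by rewrite mxE eqxx mulr1n upd_id.
by move=> k nkx; rewrite mxE eq_sym (negPf nkx) mulr0n mul0r.
Qed.

Lemma op_atC j l A B phi : j != l ->
  op_at j A (op_at l B phi) =1 op_at l B (op_at j A phi).
Proof.
move=> njl x; rewrite /op_at.
under eq_bigr do rewrite big_distrr.
under [RHS]eq_bigr do rewrite big_distrr.
rewrite exchange_big; apply: eq_bigr => m _; apply: eq_bigr => k _ /=.
by rewrite upd_other 1?eq_sym // upd_other // (upd_comm _ _ _ njl) mulrCA.
Qed.

Variables (z : 'I_n) (psi : tensor R n d).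

Definition factor_uniform A := forall j, op_at j A psi =1 op_at z A psi.

Lemma factor_uniform_mul A B :
  factor_uniform A -> factor_uniform B -> A *m B = B *m A ->
  factor_uniform (A *m B).
Proof.
move=> unifA unifB AB_comm j x; have [->//|njz] := eqVneq j z.
rewrite op_atM (eq_op_at _ _ (unifB j)) op_atC // (eq_op_at _ _ (unifA j)).
by rewrite -op_atM -AB_comm.
Qed.

Lemma factor_uniform_add_scalar A a :
  factor_uniform A -> factor_uniform (A + a%:M).
Proof. by move=> unifA j x; rewrite !op_atD !op_at_scalar unifA. Qed.

Hypotheses (z0 : val z = 0%N) (psi_sym : sym_vec psi).

Lemma op1_op_at A : op1 A psi =1 op_at z A psi.
Proof.
by move=> x; rewrite /op1 (big_pred1 z) // => i; rewrite /= -z0 val_eqE.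
Qed.

Lemma op1_perm A (s : 'S_n) x :
  op1 A psi [ffun i => x (s i)] = op_at (s z) A psi x.
Proof.
rewrite op1_op_at /op_at ffunE; apply: eq_bigr => k _; congr (_ * _).
rewrite -(psi_sym s (upd x (s z) k)); congr psi; apply/ffunP => i.
by rewrite !ffunE (inj_eq perm_inj).
Qed.

Lemma sym_vec_op1P A : sym_vec (op1 A psi) <-> factor_uniform A.
Proof.
split=> [sym_op j x | unifA s x].
  by have := sym_op (tperm z j) x; rewrite op1_perm tpermL op1_op_at.
by rewrite op1_perm unifA op1_op_at.
Qed.

End FactorAction.

Lemma factor_uniform_horner (R : comNzRingType) n d (z : 'I_n)
    (psi : tensor R n d.+1) (B : 'M[R]_d.+1) q :
  factor_uniform z psi B -> factor_uniform z psi (horner_mx B q).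
Proof.
move=> unifB; elim/poly_ind: q => [|q a unifBq].
  by rewrite rmorph0 => j x; rewrite /op_at !big1 // => k _; rewrite mxE mul0r.
rewrite rmorphD rmorphM /= horner_mx_X horner_mx_C.
apply/factor_uniform_add_scalar/factor_uniform_mul => //.
exact/esym/comm_mx_horner.
Qed.

Lemma strictly_upper_mx_nilpotent (R : nzRingType) d (M : 'M[R]_d.+1) :
  (forall i j : 'I_d.+1, (j <= i)%N -> M i j = 0) -> M ^+ d.+1 = 0.
Proof.
move=> M_upper.
have band t (i j : 'I_d.+1) : (j < i + t)%N -> (M ^+ t) i j = 0.
  elim: t i j => [|t IHt] i j ltji.
    by rewrite expr0 -idmxE mxE; case: eqP => // eij; rewrite eij addn0 ltnn in ltji.
  rewrite exprSr -mulmxE mxE big1 // => l _.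
  have [ltl|lel] := ltnP l (i + t); first by rewrite IHt // mul0r.
  by rewrite M_upper ?mulr0 // -ltnS (leq_trans ltji) // addnS.
by apply/matrixP => i j; rewrite band ?mxE // (leq_trans (ltn_ord j)) ?leq_addl.
Qed.

Section JordanRelabel.
Variables (F : fieldType) (d p : nat) (e : 'I_d.+1 -> 'I_p) (c : 'I_d.+1 -> bool).
Hypothesis e_blocks : jordan_consistent e c.

Local Notation J lam := (jordan_mx (fun i => lam (e i)) c).

Definition label_proj (k : 'I_p) : 'M[F]_d.+1 := diag_mx (\row_i (e i == k)%:R).

Lemma label_projE k i j : label_proj k i j = (e i == k)%:R *+ (i == j).
Proof. by rewrite !mxE. Qed.

Lemma label_proj_comm lam k : J lam * label_proj k = label_proj k * J lam.
Proof.
rewrite -!mulmxE mul_mx_diag mul_diag_mx; apply/matrixP => i j; rewrite !mxE.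
have [->|nij] := eqVneq i j; first by rewrite mulrC.
rewrite mul0r add0r.
case: andP => [[/eqP ji ci]|_]; last by rewrite mulr0 mul0r.
by rewrite (e_blocks ji ci) mulr1 mul1r.
Qed.

Lemma label_proj_idem k : label_proj k * label_proj k = label_proj k.
Proof.
rewrite -mulmxE mul_diag_mx; apply/matrixP => i j; rewrite !mxE.
by case: (e i == k); rewrite ?mul1r ?mul0r ?mul0rn.
Qed.

Lemma sum_label_proj : \sum_k label_proj k = 1.
Proof.
apply/matrixP => i j; rewrite summxE -idmxE [RHS]mxE.
under eq_bigr do rewrite label_projE.
rewrite (bigD1 (e i)) //= eqxx big1 ?addr0 // => k nke.
by rewrite eq_sym (negPf nke) mul0rn.
Qed.

Lemma jordan_mx_relabel lam lam' :
  J lam' = J lam + \sum_k (lam' k - lam k) *: label_proj k.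
Proof.
apply/matrixP => i j; rewrite !mxE summxE.
under eq_bigr do rewrite mxE label_projE.
rewrite (bigD1 (e i)) //= eqxx big1 ?addr0 => [|k nke]; last first.
  by rewrite eq_sym (negPf nke) mul0rn mulr0.
case: (i == j); rewrite ?mul1r ?mul0r ?mulr1 ?mulr0 ?add0r ?addr0 //.
by rewrite addrAC addrCA subrr addr0 addrC.
Qed.

Variables (lam : 'I_p -> F) (lam_inj : injective lam).

Definition gen_eigen_poly (k : 'I_p) : {poly F} := ('X - (lam k)%:P) ^+ d.+1.

Lemma horner_gen_eigen_poly_proj k :
  horner_mx (J lam) (gen_eigen_poly k) * label_proj k = 0.
Proof.
rewrite rmorphXn rmorphB /= horner_mx_X horner_mx_C.
have comm_shift : GRing.comm (J lam - (lam k)%:M) (label_proj k).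
  by rewrite /GRing.comm mulrBl mulrBr label_proj_comm -!mulmxE scalar_mxC.
have proj_exp t : label_proj k ^+ t.+1 = label_proj k.
  by elim: t => [|t IHt]; rewrite ?expr1 // exprS IHt label_proj_idem.
rewrite -(proj_exp d) -exprMn_comm //; apply: strictly_upper_mx_nilpotent => i j leji.
rewrite -mulmxE mul_mx_diag !mxE.
have [<-|nij] := eqVneq i j.
  rewrite (ltn_eqF (ltnSn i)) mul1r mulr1n addr0.
  by case: eqP => [->|_]; rewrite ?subrr ?mulr0 ?mul0r.
have /negPf-> : nat_of_ord j != (nat_of_ord i).+1 by rewrite neq_ltn ltnS leji.
by rewrite mul0r add0r subr0 mul0r.
Qed.

Definition other_eigen_poly (k : 'I_p) : {poly F} :=
  \prod_(l | l != k) gen_eigen_poly l.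

Lemma horner_other_eigen_poly_proj k l : l != k ->
  horner_mx (J lam) (other_eigen_poly k) * label_proj l = 0.
Proof.
move=> nlk; rewrite /other_eigen_poly (bigD1 l) //= mulrC rmorphM /= -mulrA.
by rewrite horner_gen_eigen_poly_proj mulr0.
Qed.

Lemma coprimep_gen_other_eigen_poly k :
  coprimep (gen_eigen_poly k) (other_eigen_poly k).
Proof.
apply: (big_ind (coprimep (gen_eigen_poly k))) => [|q1 q2 cop1 cop2|l nlk].
- exact: coprimep1.
- by rewrite coprimepMr cop1 cop2.
- apply/coprimep_expl/coprimep_expr/coprimep_XsubC2.
  by rewrite subr_eq0; apply: contra nlk => /eqP/lam_inj->.
Qed.

Lemma label_proj_horner k : exists q, horner_mx (J lam) q = label_proj k.
Proof.
have [[u v] /= uv_unit] := Bezout_coprimepP _ _ (coprimep_gen_other_eigen_poly k).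
have /size_poly1P [a a_nz uvE] : size (u * gen_eigen_poly k + v * other_eigen_poly k) == 1%N.
  by rewrite (eqp_size uv_unit) size_poly1.
exists (a^-1 *: (v * other_eigen_poly k)); rewrite linearZ /=.
suff -> : horner_mx (J lam) (v * other_eigen_poly k) = a *: label_proj k.
  by rewrite scalerA mulVf // scale1r.
rewrite -[LHS]mulr1 -sum_label_proj mulr_sumr (bigD1 k) //= big1 ?addr0.
  have -> : v * other_eigen_poly k = a%:P - u * gen_eigen_poly k.
    by rewrite -uvE addrC addKr.
  rewrite rmorphB rmorphM /= horner_mx_C mulrBl -mulrA.
  by rewrite horner_gen_eigen_poly_proj mulr0 subr0 -mulmxE mul_scalar_mx.
by move=> l nlk; rewrite rmorphM /= -mulrA horner_other_eigen_poly_proj ?mulr0.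
Qed.

Lemma jordan_mx_relabel_horner lam' : exists q, horner_mx (J lam) q = J lam'.
Proof.
pose in_poly_alg (X : 'M[F]_d.+1) := exists q, horner_mx (J lam) q = X.
have in_poly_algD X Y : in_poly_alg X -> in_poly_alg Y -> in_poly_alg (X + Y).
  by move=> [q1 <-] [q2 <-]; exists (q1 + q2); rewrite rmorphD.
rewrite (jordan_mx_relabel lam lam'); apply: (in_poly_algD).
  by exists 'X; rewrite horner_mx_X.
apply: big_ind => [|X Y|k _]; [by exists 0; rewrite rmorph0 | exact: in_poly_algD |].
have [q qE] := label_proj_horner k.
by exists ((lam' k - lam k) *: q); rewrite linearZ /= qE.
Qed.

End JordanRelabel.

Lemma sym_vec_op1_jordan_relabel (F : fieldType) n d p (z : 'I_n) (z0 : val z = 0%N)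
    (P : 'M[F]_d.+1) (P_unit : P \in unitmx)
    (e : 'I_d.+1 -> 'I_p) c (e_blocks : jordan_consistent e c)
    (lam lam' : 'I_p -> F) (lam_inj : injective lam)
    (psi : tensor F n d.+1) (psi_sym : sym_vec psi) :
  sym_vec (op1 (P *m jordan_mx (fun i => lam (e i)) c *m invmx P) psi) ->
  sym_vec (op1 (P *m jordan_mx (fun i => lam' (e i)) c *m invmx P) psi).
Proof.
have [q <-] := jordan_mx_relabel_horner e_blocks lam_inj lam'.
rewrite -horner_mx_uconj // => /(sym_vec_op1P z0 psi_sym) unifB.
exact/(sym_vec_op1P z0 psi_sym)/factor_uniform_horner.
Qed.

Theorem theorem3 (C : numClosedFieldType) (n d p : nat) (hn : (2 <= n)%N)
  (P : 'M[C]_d) (hP : P \in unitmx)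
  (e : 'I_d -> 'I_p) (c : 'I_d -> bool) (hJ : jordan_consistent e c)
  (he : forall k : 'I_p, exists i : 'I_d, e i = k)
  (lam lamt : 'I_p -> C) (hlam : injective lam) (hlamt : injective lamt)
  (psi : tensor C n d) (hpsi : sym_vec psi) :
  sym_vec (op1 (P *m jordan_mx (fun i => lam (e i)) c *m invmx P) psi)
  <-> sym_vec (op1 (P *m jordan_mx (fun i => lamt (e i)) c *m invmx P) psi).
Proof.
have n_gt0 : (0 < n)%N by apply: leq_trans hn.
case: d P hP e c hJ psi hpsi {he} => [|d] P hP e c hJ psi hpsi.
  by split=> _ s x; case: (x (Ordinal n_gt0)).
by split; apply: (@sym_vec_op1_jordan_relabel _ _ _ _ (Ordinal n_gt0)).
Qed.
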